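(* Let $G$ be a connected threshold graph of order $n\ge 4$ and size $m$ with $n-1<m<\binom{n}{2}$, let $c$ be its number of type 1 vertices, $(b_1,\ldots,b_z)$ its backwards zero position sequence, $F_1=\sum_{i=1}^z b_i^2$, and $\rho$ the spectral radius of its adjacency matrix. Then \[\rho\ge\frac{c-2+\sqrt{c^2+\frac{4}{c-1}F_1}}{2}.\]
   Context: A threshold graph is a simple graph whose vertices can be ordered $v_1,\ldots,v_n$ so that for each $2\le i\le n$, $v_i$ is either adjacent to all of $v_1,\ldots,v_{i-1}$ (then $a_i=1$) or to none of them (then $a_i=0$); by convention $a_1=1$. Vertex $v_i$ is of type 1 if $a_i=1$ and of type 0 if $a_i=0$; $c$ and $z$ are the numbers of type 1 and type 0 vertices. The backwards zero position sequence $(b_1,\ldots,b_z)$ is defined by letting $b_i$ be the number of type 1 vertices appearing after the $i$-th type 0 vertex in the order $v_1,\ldots,v_n$. *)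

From mathcomp Require Import all_boot all_order all_algebra all_field.
Set Implicit Arguments. Unset Strict Implicit. Unset Printing Implicit Defensive.
Import Order.TTheory GRing.Theory Num.Theory.

(* A threshold graph on n vertices is given by its creation sequence
   a = [:: a_1; ...; a_n] (0-indexed in Rocq: a_{i+1} = nth false a i).
   Vertices are 'I_n (vertex i stands for v_{i+1}); for i < j, v_i ~ v_j
   iff a_j = 1, i.e. two distinct vertices are adjacent iff the later one
   has type 1. *)
Definition tg_adj (n : nat) (a : seq bool) : rel 'I_n :=
  fun i j => (i != j) && nth false a (maxn i j).

Definition tg_connected (n : nat) (a : seq bool) : Prop :=
  forall i j : 'I_n, connect (tg_adj a) i j.

Definition tg_size (n : nat) (a : seq bool) : nat :=
  #|[set p : 'I_n * 'I_n | (p.1 < p.2)%N && tg_adj a p.1 p.2]|.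

Definition tg_c (a : seq bool) : nat := count id a.

Definition tg_bseq (a : seq bool) : seq nat :=
  [seq count id (drop k.+1 a) | k <- iota 0 (size a) & ~~ nth true a k].

Definition tg_F1 (a : seq bool) : nat := \sum_(b <- tg_bseq a) b ^ 2.

Definition tg_adjmx (n : nat) (a : seq bool) : 'M[algC]_n :=
  \matrix_(i, j) ((tg_adj a i j)%:R)%R.

Local Open Scope ring_scope.

Definition is_spectral_radius (n : nat) (A : 'M[algC]_n) (rho : algC) : Prop :=
  (exists2 l, eigenvalue A l & `|l| = rho) /\
  (forall l, eigenvalue A l -> `|l| <= rho).

From mathcomp Require Import all_boot all_order all_algebra all_field.
From mathcomp Require Import zify ring.
Set Implicit Arguments. Unset Strict Implicit. Unset Printing Implicit Defensive.
Import Order.TTheory GRing.Theory Num.Theory.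

(* Rayleigh quotient with a test vector.  Declaring v_1 of type 0 leaves the
   graph unchanged; afterwards there are c' = c - 1 vertices of type 1 and
   F' = F_1 + (c - 1)^2.  Put x_i = lam on type-1 vertices and x_i = b_i (the
   number of later type-1 vertices) on type-0 vertices.  Every edge joins a
   vertex to a later type-1 vertex, so x A x^T = 2 lam (lam c'(c'-1)/2 + F')
   while x x^T = c' lam^2 + F'.  Hence x A x^T = lam x x^T exactly when
   c' lam^2 = c'(c'-1) lam + F', whose positive root is the claimed bound, and
   rho >= x A x^T / x x^T because A is symmetric. *)

Lemma count_drop (s : seq bool) m :
  count id (drop m s) = \sum_(m <= i < size s) nth false s i.
Proof.
elim: s m => [|x s IHs] m; first by rewrite drop_oversize ?big_geq.
case: m => [|m] /=; last by rewrite big_add1 IHs.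
by rewrite big_ltn // big_add1 -IHs drop0.
Qed.

Definition tg_b (a : seq bool) (i : nat) : nat := count id (drop i.+1 a).

Lemma tg_F1E a : tg_F1 a = \sum_(0 <= i < size a | ~~ nth false a i) tg_b a i ^ 2.
Proof.
rewrite /tg_F1 /tg_bseq big_map big_filter /index_iota subn0 !(big_mkcond (fun i => ~~ _)).
by apply: eq_big_seq => i; rewrite mem_iota => /andP[_ ia]; rewrite (set_nth_default false).
Qed.

Lemma tg_F1_cons x t : tg_F1 (x :: t) = (~~ x) * count id t ^ 2 + tg_F1 t.
Proof.
by rewrite !tg_F1E big_ltn_cond // big_add1 /tg_b /= drop0; case: x; rewrite /= ?mul1n.
Qed.

Lemma double_sum_tg_b_type1 a :
  2 * \sum_(0 <= i < size a | nth false a i) tg_b a i = tg_c a * (tg_c a).-1.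
Proof.
elim: a => [|x t IHt]; first by rewrite big_geq.
rewrite big_ltn_cond // big_add1 /tg_b /= drop0 -/(tg_b t _).
rewrite /tg_c /= in IHt *; case: x => /=; last by rewrite IHt.
by rewrite mulnDr IHt; case: (count id t) => [|k]; nia.
Qed.

Lemma tg_adjmx_cons n x y t : tg_adjmx n (x :: t) = tg_adjmx n (y :: t).
Proof.
apply/matrixP => i j; rewrite !mxE /tg_adj.
have [//|/= ij] := eqVneq i j.
suff : (0 < maxn i j)%N by case: (maxn i j).
by move: ij; rewrite -val_eqE /=; lia.
Qed.

Local Open Scope ring_scope.

Lemma sum_sym_zero_diag (R : nmodType) (G : nat -> nat -> R) n :
  (forall i j, G i j = G j i) -> (forall i, G i i = 0) ->
  \sum_(0 <= i < n) \sum_(0 <= j < n) G i j =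
  (\sum_(0 <= i < n) \sum_(i.+1 <= j < n) G i j) *+ 2.
Proof.
move=> Gsym G0; elim: n => [|n IHn]; first by rewrite !big_geq // mul0rn.
have upperE : \sum_(0 <= i < n.+1) \sum_(i.+1 <= j < n.+1) G i j =
    \sum_(0 <= i < n) \sum_(i.+1 <= j < n) G i j + \sum_(0 <= i < n) G i n.
  rewrite big_nat_recr //= [X in _ + X]big_geq // addr0 -big_split /=.
  by apply: eq_big_nat => i /andP[_ lt_in]; rewrite big_nat_recr.
have fullE : \sum_(0 <= i < n.+1) \sum_(0 <= j < n.+1) G i j =
    \sum_(0 <= i < n) \sum_(0 <= j < n) G i j + (\sum_(0 <= i < n) G i n) *+ 2.
  under eq_bigr do rewrite big_nat_recr //.
  rewrite big_split /= big_nat_recr //= big_nat_recr //= G0 addr0 mulr2n !addrA.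
  by congr (_ + _ + _); apply: eq_bigr => i _; rewrite Gsym.
by rewrite fullE upperE IHn mulrnDl.
Qed.

Lemma tg_adjmx_form n a (f : nat -> algC) :
  (\row_(i < n) f i *m tg_adjmx n a *m (\row_(i < n) f i)^T) 0 0 =
  (\sum_(0 <= j < n) f j * \sum_(j.+1 <= i < n) (nth false a i)%:R * f i) *+ 2.
Proof.
pose G (i j : nat) : algC := f i * ((i != j) && nth false a (maxn i j))%:R * f j.
have Gsym i j : G i j = G j i by rewrite /G eq_sym maxnC; ring.
have -> : (\row_(i < n) f i *m tg_adjmx n a *m (\row_(i < n) f i)^T) 0 0 =
    \sum_(0 <= i < n) \sum_(0 <= j < n) G i j.
  rewrite mxE big_mkord; apply: eq_bigr => j _; rewrite !mxE big_mkord mulr_suml.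
  by apply: eq_bigr => i _; rewrite !mxE /tg_adj Gsym.
rewrite sum_sym_zero_diag // => [|i]; last by rewrite /G eqxx mulr0 mul0r.
congr (_ *+ 2); apply: eq_bigr => j _; rewrite mulr_sumr.
apply: eq_big_nat => i /andP[lt_ji _].
by rewrite /G (ltn_eqF lt_ji) (maxn_idPr (ltnW lt_ji)) mulrA.
Qed.

Section NormalMatrixRayleigh.
Local Open Scope sesquilinear_scope.
Variables (C : numClosedFieldType) (n : nat) (A : 'M[C]_n).
Hypothesis normalA : A \is normalmx.
Local Notation P := (spectralmx A).
Local Notation d := (spectral_diag A).

Lemma eigenvalue_spectral_diag i : eigenvalue A (d 0 i).
Proof.
have PA : P *m A = diag_mx d *m P.
  rewrite [X in _ *m X = _](orthomx_spectralP normalA) !mulmxA.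
  by rewrite mulmxV ?spectral_unit ?mul1mx.
apply/eigenvalueP; exists (row i P).
  by rewrite -row_mul PA mul_diag_mx; apply/rowP => j; rewrite !mxE.
apply/eqP => /(congr1 (fun v => (v *m P^t*) 0 i)).
rewrite -row_mul (unitarymxP (spectral_unitarymx A)) mul0mx !mxE eqxx.
by move=> /eqP; rewrite oner_eq0.
Qed.

Lemma Re_form_le_spectral_bound (rho : C) (x : 'rV[C]_n) :
  (forall l, eigenvalue A l -> `|l| <= rho) ->
  'Re ((x *m A *m x^t*) 0 0) <= rho * (x *m x^t*) 0 0.
Proof.
move=> rho_bound; have Punitary := spectral_unitarymx A.
set y := x *m P^t*.
have ytE : y^t* = P *m x^t* by rewrite /y trmx_mul map_mxM trmxCK.
have formE : x *m A *m x^t* = y *m diag_mx d *m y^t*.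
  by rewrite {1}(orthomx_spectralP normalA) invmx_unitary // ytE /y !mulmxA.
have normE : x *m x^t* = y *m y^t*.
  rewrite ytE /y -!mulmxA (mulmxA _ P) -invmx_unitary // mulVmx ?spectral_unit //.
  by rewrite mul1mx.
rewrite formE normE; clearbody y.
rewrite mul_mx_diag !mxE raddf_sum /= mulr_sumr; apply: ler_sum => j _; rewrite !mxE.
rewrite mulrAC -normCK mulrC ReMr ?realX ?normr_real // ler_wpM2r ?exprn_ge0 //.
exact: le_trans (leif_Re_Creal _).1 (rho_bound _ (eigenvalue_spectral_diag j)).
Qed.
End NormalMatrixRayleigh.

Section TestVector.
Variables (a : seq bool) (lam : algC).
Local Notation n := (size a).
Local Notation b := (tg_b a).

Definition tg_test_vector (i : nat) : algC := if nth false a i then lam else (b i)%:R.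
Local Notation f := tg_test_vector.

Lemma tg_sum_type1_const (r : algC) :
  \sum_(0 <= j < n | nth false a j) r = (tg_c a)%:R * r.
Proof.
rewrite /tg_c -sum1_count (big_nth false) natr_sum mulr_suml.
by apply: eq_bigr => j _; rewrite mul1r.
Qed.

Lemma tg_test_vector_above j :
  \sum_(j.+1 <= i < n) (nth false a i)%:R * f i = lam * (b j)%:R.
Proof.
rewrite /tg_b count_drop natr_sum mulr_sumr; apply: eq_bigr => i _.
by rewrite /f; case: nth; rewrite ?mul1r ?mulr1 ?mul0r ?mulr0.
Qed.

Lemma tg_test_vector_dot_b :
  \sum_(0 <= j < n) f j * (b j)%:R =
  lam * (\sum_(0 <= j < n | nth false a j) b j)%:R + (tg_F1 a)%:R.
Proof.
rewrite (bigID (fun j => nth false a j)) /= tg_F1E !natr_sum mulr_sumr.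
congr (_ + _); apply: eq_bigr => j; rewrite /f; [by move=> -> | move/negbTE ->].
by rewrite natrX expr2.
Qed.

Lemma tg_test_vector_norm :
  \sum_(0 <= j < n) f j * f j = (tg_c a)%:R * lam ^+ 2 + (tg_F1 a)%:R.
Proof.
rewrite (bigID (fun j => nth false a j)) /= tg_F1E natr_sum -tg_sum_type1_const.
congr (_ + _); apply: eq_bigr => j; rewrite /f; [by move=> -> | move/negbTE ->].
by rewrite natrX expr2.
Qed.

End TestVector.

Section SpectralBound.
Local Open Scope sesquilinear_scope.

Lemma tg_adjmx_normal n a : tg_adjmx n a \is normalmx.
Proof.
have adjE : (tg_adjmx n a)^t* = tg_adjmx n a.
  by apply/matrixP => i j; rewrite !mxE conjC_nat /tg_adj eq_sym maxnC.
by apply/normalmxP; rewrite adjE.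
Qed.

Lemma tg_quadratic_root_le_spectral_bound a (lam rho : algC) :
  (forall l, eigenvalue (tg_adjmx (size a) a) l -> `|l| <= rho) ->
  (0 < tg_c a)%N -> 0 < lam ->
  (tg_c a)%:R * lam ^+ 2 = (tg_c a * (tg_c a).-1)%:R * lam + (tg_F1 a)%:R ->
  lam <= rho.
Proof.
move=> rho_bound c_gt0 lam_gt0 lam_root.
set f := tg_test_vector a lam; pose x := \row_(i < size a) f i.
set N := \sum_(0 <= j < size a) f j * f j.
have xtE : x^t* = x^T.
  apply/matrixP => i j; rewrite !mxE /f /tg_test_vector.
  by case: ifP; rewrite ?conjC_nat ?(conj_Creal (gtr0_real lam_gt0)).
have normE : (x *m x^T) 0 0 = N.
  by rewrite mxE /N big_mkord; apply: eq_bigr => i _; rewrite !mxE.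
have formE : (x *m tg_adjmx (size a) a *m x^T) 0 0 = lam * N.
  rewrite tg_adjmx_form.
  under eq_big_nat => j _ do rewrite tg_test_vector_above mulrCA.
  rewrite -mulr_sumr tg_test_vector_dot_b /N tg_test_vector_norm lam_root.
  by rewrite -(double_sum_tg_b_type1 a) natrM; ring.
have N_gt0 : 0 < N.
  by rewrite /N tg_test_vector_norm ltr_wpDr ?ler0n ?mulr_gt0 ?ltr0n ?exprn_gt0.
have := Re_form_le_spectral_bound (tg_adjmx_normal _ a) x rho_bound.
have form_real : lam * N \is Num.real by rewrite realM ?gtr0_real.
by rewrite xtE formE normE (Creal_ReP _ form_real) ler_pM2r.
Qed.

End SpectralBound.

Lemma sqrtC_quadratic_root (C : numClosedFieldType) (c F lam : C) : c != 1 ->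
  lam = (c - 2 + sqrtC (c ^+ 2 + 4 / (c - 1) * F)) / 2 ->
  (c - 1) * lam ^+ 2 = (c - 1) * (c - 2) * lam + ((c - 1) ^+ 2 + F).
Proof.
rewrite -subr_eq0 => c1_neq0 ->; set D := _ + _ * F; set s := sqrtC D.
apply/eqP; rewrite -subr_eq0.
have -> : (c - 1) * ((c - 2 + s) / 2) ^+ 2 -
    ((c - 1) * (c - 2) * ((c - 2 + s) / 2) + ((c - 1) ^+ 2 + F)) =
    (c - 1) / 4 * (s ^+ 2 - D).
  by rewrite /D; field.
by rewrite /s sqrtCK subrr mulr0.
Qed.

Theorem theorem6p1 (n : nat) (a : seq bool) (rho : algC) :
  size a = n ->
  nth false a 0 = true ->
  (4 <= n)%N ->
  tg_connected n a ->
  (n.-1 < tg_size n a < 'C(n, 2))%N ->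
  is_spectral_radius (tg_adjmx n a) rho ->
  ((tg_c a)%:R - 2 + sqrtC ((tg_c a)%:R ^+ 2 + 4 / ((tg_c a)%:R - 1) * (tg_F1 a)%:R)) / 2
    <= rho.
Proof.
move=> <- a0 _ _ _ [[l0 _ l0_rho] rho_bound].
case: a a0 rho_bound => [//|_ t /= ->] rho_bound.
rewrite /tg_c /= add1n; case k_def: (count id t) => [|k].
  (* c = 1: the junk value 4 / 0 = 0 makes the bound 0. *)
  rewrite subrr invr0 mulr0 mul0r addr0 expr1n sqrtC1 -l0_rho.
  by rewrite [X in X / 2](_ : _ = 0) ?mul0r //; ring.
have c2E : k.+2%:R - 2 = k%:R :> algC by rewrite -addn2 natrD addrK.
have c1E : k.+2%:R - 1 = k.+1%:R :> algC by rewrite -addn1 natrD addrK.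
set lam := (_ / 2).
have lam_gt0 : 0 < lam.
  rewrite divr_gt0 // c2E ltr_wpDl ?ler0n // sqrtC_gt0 c1E.
  by rewrite ltr_wpDr ?mulr_ge0 ?invr_ge0 ?ler0n ?exprn_gt0.
(* Regard v_1 as a vertex of type 0. *)
apply: (tg_quadratic_root_le_spectral_bound (a := false :: t)) lam_gt0 _.
- by rewrite (tg_adjmx_cons _ false true).
- by rewrite /tg_c /= k_def.
rewrite /tg_c /= k_def tg_F1_cons /= k_def add0n.
have c_neq1 : k.+2%:R != 1 :> algC by rewrite pnatr_eq1.
have := sqrtC_quadratic_root (F := (tg_F1 (true :: t))%:R) c_neq1 (erefl lam).
by rewrite c1E c2E tg_F1_cons mul0n add0n mul1n natrD natrM natrX => ->.
Qed.
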